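(* Let $(X,b)$ be a locally finite weighted graph all of whose connected components are infinite, and let $V\colon X\to\mathbb R$ be such that for every $x\in X$ either $V(x)\ge0$ or $V(x)+2\deg(x)\le0$. Then $\mathcal L_V\colon C(X)\to C(X)$ is surjective.
   Context: Weighted graph: $X$ countable, $b\colon X\times X\to[0,\infty)$ with $b(x,x)=0$, $b(x,y)=b(y,x)$, $\deg(x)=\sum_y b(x,y)<\infty$; locally finite means each vertex has finitely many $y$ with $b(x,y)>0$. Connected components are equivalence classes of ''connected by a finite path $x_1,\dots,x_n$ with $b(x_i,x_{i+1})>0$''. $C(X)$ is the space of complex functions on $X$, and $\mathcal L_Vf(x)=\sum_y b(x,y)(f(x)-f(y))+V(x)f(x)$. *)

From HB Require Import structures.
From mathcomp Require Import all_boot all_order all_algebra.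
From mathcomp Require Import boolp classical_sets functions cardinality fsbigop reals.
From mathcomp Require Import complex.
Set Implicit Arguments. Unset Strict Implicit. Unset Printing Implicit Defensive.
Import Order.TTheory GRing.Theory Num.Theory.
Local Open Scope classical_set_scope.
Local Open Scope ring_scope.
Local Open Scope complex_scope.

Definition weighted_graph (R : realType) (X : countType) (b : X -> X -> R) :=
  (forall x y, 0 <= b x y) /\ (forall x, b x x = 0) /\ (forall x y, b x y = b y x).

Definition locally_finite (R : realType) (X : countType) (b : X -> X -> R) :=
  forall x, finite_set [set y | 0 < b x y].

Definition deg (R : realType) (X : countType) (b : X -> X -> R) (x : X) : R :=
  \sum_(y \in [set: X]) b x y.

Definition gconnected (R : realType) (X : countType) (b : X -> X -> R) (x y : X) :=
  exists s : seq X, path (fun u v => 0 < b u v) x s /\ last x s = y.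

Definition all_components_infinite (R : realType) (X : countType) (b : X -> X -> R) :=
  forall x, infinite_set [set y | gconnected b x y].

(* The Schroedinger operator L_V on C(X) = X -> R[i]:
   L_V f x = sum_y b(x,y) (f x - f y) + V x f x *)
Definition schrod (R : realType) (X : countType) (b : X -> X -> R) (V : X -> R)
  (f : X -> R[i]) (x : X) : R[i] :=
  (\sum_(y \in [set: X]) ((b x y)%:C * (f x - f y))) + (V x)%:C * f x.

(* A finitely supported solution of L_V phi = 0 on its support vanishes: at
   a vertex x where |phi| is maximal the condition on V gives
   deg(x) |phi x| <= |deg(x) + V(x)| |phi x| <= sum_y b(x,y) |phi y|, so |phi|
   is maximal at every neighbour as well, and the maximal level set contains a
   whole connected component, which is infinite.  Hence every finite system
   "L_V h = g on E" is solvable, as the square system with h supported on E is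
   injective.  Since L_V is linear and local, such finite solutions glue:
   enumerating X, the values of h are fixed one vertex at a time, and a value
   at the next vertex compatible with all finite systems exists because the
   admissible values for each system form an affine subspace of C. *)

From HB Require Import structures.
From mathcomp Require Import all_boot all_order all_algebra.
From mathcomp Require Import boolp classical_sets cardinality fsbigop reals.
From mathcomp Require Import complex.
From mathcomp Require Import lra ring.
Import Order.TTheory GRing.Theory Num.Theory.
Set Implicit Arguments. Unset Strict Implicit. Unset Printing Implicit Defensive.
Local Open Scope ring_scope.
Local Open Scope complex_scope.

Section LinearOperator.
Variables (K : fieldType) (X : countType) (L : (X -> K) -> X -> K).
Hypothesis L_linear :
  forall f g t x, L (fun y => f y + t * g y) x = L f x + t * L g x.

Lemma L_linear0 x : L (fun=> 0) x = 0.
Proof.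
have := L_linear (fun=> 0) (fun=> 0) 1 x; rewrite mulr0 addr0 mul1r => h.
by apply: (addrI (L (fun=> 0) x)); rewrite addr0 -h.
Qed.

Lemma L_linearB f g x : L (fun y => g y - f y) x = L g x - L f x.
Proof.
have := L_linear f (fun y => g y - f y) 1 x.
have -> : (fun y => f y + 1 * (g y - f y)) = g.
  by apply/funext => y; rewrite mul1r addrC subrK.
by move=> ->; rewrite mul1r addrAC subrr add0r.
Qed.

Lemma L_linear_sum (I : Type) (r : seq I) (c : I -> K) (e : I -> X -> K) x :
  L (fun y => \sum_(i <- r) c i * e i y) x = \sum_(i <- r) c i * L (e i) x.
Proof.
elim: r => [|i r IH].
  have -> : (fun y => \sum_(i <- [::]) c i * e i y) = fun=> 0.
    by apply/funext => y; rewrite big_nil.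
  by rewrite L_linear0 big_nil.
have -> : (fun y => \sum_(j <- i :: r) c j * e j y) =
          (fun y => \sum_(j <- r) c j * e j y + c i * e i y).
  by apply/funext => y; rewrite big_cons addrC.
by rewrite L_linear IH big_cons addrC.
Qed.

Lemma solvable_on_seq (s : seq X) (g : X -> K) :
  (forall phi, (forall y, y \notin s -> phi y = 0) ->
     {in s, forall x, L phi x = 0} -> forall y, phi y = 0) ->
  exists h, {in s, forall x, L h x = g x}.
Proof.
move=> L_inj.
pose t := in_tuple (undup s); pose n := size (undup s).
have t_inj : injective (tnth t) := elimT (tuple_uniqP t) (undup_uniq s).
have t_onto x : x \in s -> exists j, x = tnth t j.
  by rewrite -mem_undup => /seq_tnthP [j ->]; exists j.
pose comb (u : 'rV[K]_n) y := \sum_(i < n) u 0 i * (tnth t i == y)%:R.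
have comb_out u y : y \notin s -> comb u y = 0.
  move=> ys; apply: big1 => i _; case: eqP => [ti|]; last by rewrite mulr0.
  by move: ys; rewrite -ti -mem_undup mem_tnth.
have comb_t u j : comb u (tnth t j) = u 0 j.
  rewrite /comb (bigD1 j) //= eqxx mulr1 big1 ?addr0 // => i ij.
  by rewrite (inj_eq t_inj) (negbTE ij) mulr0.
pose M : 'M[K]_n := \matrix_(i, j) L (fun y => (tnth t i == y)%:R) (tnth t j).
have combM u j : (u *m M) 0 j = L (comb u) (tnth t j).
  by rewrite L_linear_sum mxE; apply: eq_bigr => i _; rewrite mxE.
have M_unit : M \in unitmx.
  rewrite unitmxE unitfE; apply/negP => /det0P [v v_neq0 vM].
  have comb0 : forall y, comb v y = 0.
    apply: (L_inj _ (comb_out v)) => x /t_onto [j ->].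
    by rewrite -combM vM mxE.
  by move/negP: v_neq0; apply; apply/eqP/rowP => j; rewrite -comb_t comb0 mxE.
exists (comb (\row_j g (tnth t j) *m invmx M)) => x /t_onto [j ->].
by rewrite -combM mulmxKV // mxE.
Qed.

Variable g : X -> K.

Definition extendable (A : {pred X}) (p : X -> K) :=
  forall E : seq X, exists2 h, {in E, forall x, L h x = g x} & {in A, h =1 p}.

Lemma sub_extendable (A B : {pred X}) p :
  {subset B <= A} -> extendable A p -> extendable B p.
Proof.
by move=> BA ext E; have [h hE hA] := ext E; exists h => // y /BA /hA.
Qed.

Lemma extendable_value (A : {pred X}) (p : X -> K) x0 : extendable A p ->
  exists c, forall E : seq X, exists h,
    [/\ {in E, forall x, L h x = g x}, {in A, h =1 p} & h x0 = c].
Proof.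
move=> ext; apply: contrapT => no_value.
have forbid c : exists E : seq X, forall h, {in E, forall x, L h x = g x} ->
    {in A, h =1 p} -> h x0 != c.
  apply: contrapT => allowed; apply: no_value; exists c => E.
  apply: contrapT => no_h; apply: allowed; exists E => h hE hA.
  by apply/eqP => hc; apply: no_h; exists h.
have [E1 forbid1] := forbid 0.
have [h1 h1E h1A] := ext E1.
have [E2 forbid2] := forbid (h1 x0).
have [h2 h2E h2A] := ext (E1 ++ E2).
have h21 : h2 x0 - h1 x0 != 0.
  rewrite subr_eq0; apply: forbid2 => // x xE2.
  by apply: h2E; rewrite mem_cat xE2 orbT.
(* The affine line through h1 and h2 still solves E1 and meets the value 0. *)
pose t := - h1 x0 / (h2 x0 - h1 x0).
suff : (fun y => h1 y + t * (h2 y - h1 y)) x0 != 0.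
  by rewrite /= /t divfK // subrr eqxx.
apply: (forbid1 (fun y => h1 y + t * (h2 y - h1 y))) => [x xE1 | y yA].
  by rewrite L_linear L_linearB h1E // h2E ?mem_cat ?xE1 // subrr mulr0 addr0.
by rewrite h1A // h2A // subrr mulr0 addr0.
Qed.

Lemma extendable_point (A : {pred X}) p x0 : extendable A p ->
  exists2 p', extendable (predU1 x0 A) p' & {in A, p' =1 p}.
Proof.
move=> /(extendable_value x0) [c ext_c].
exists (fun y => if y \in A then p y else c) => [E | y ->//].
have [h [hE hA hx0]] := ext_c E; exists h => // y.
by case: ifPn => [/hA //| yA /predU1P [->//| /(negP yA)]].
Qed.

Definition pickled_below n : {pred X} := [pred x | pickle x < n]%N.

Lemma extendable_next n p : extendable (pickled_below n) p ->
  exists2 p', extendable (pickled_below n.+1) p' &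
    {in pickled_below n, p' =1 p}.
Proof.
have below_next x :
    x \in pickled_below n.+1 -> pickle_inv n = Some x \/ x \in pickled_below n.
  rewrite !inE ltnS leq_eqVlt => /orP[/eqP <-|]; last by right.
  by left; exact: pickleK_inv.
case Hn: (pickle_inv n) => [x0|] ext.
  have [p' ext' p'p] := extendable_point x0 ext; exists p' => //.
  apply: sub_extendable ext' => x /below_next [|xn].
    by rewrite Hn => -[->]; rewrite inE eqxx.
  by apply/predU1P; right.
exists p => //; apply: sub_extendable ext => x /below_next [|//].
by rewrite Hn.
Qed.

Lemma extendable_chain p0 : extendable (pickled_below 0) p0 ->
  exists P : nat -> X -> K,
    forall n, extendable (pickled_below n) (P n) /\
      {in pickled_below n, P n.+1 =1 P n}.
Proof.
move=> ext0.
have step (q : nat * (X -> K)) :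
  exists p', extendable (pickled_below q.1) q.2 ->
    extendable (pickled_below q.1.+1) p' /\ {in pickled_below q.1, p' =1 q.2}.
  case: q => n p; have [ext|no_ext] := pselect (extendable (pickled_below n) p).
    by have [p' ext' p'p] := extendable_next ext; exists p'.
  by exists p => /no_ext.
have [next nextP] := choice step.
pose P := fix P n := if n is m.+1 then next (m, P m) else p0.
have extP n : extendable (pickled_below n) (P n).
  by elim: n => // n IH; exact: (nextP (n, P n) IH).1.
by exists P => n; split; [|exact: (nextP (n, P n) (extP n)).2].
Qed.

Variable N : X -> seq X.
Hypothesis L_local : forall f h x, {in N x, f =1 h} -> L f x = L h x.

Lemma surjective_of_solvable :
  (forall E : seq X, exists h, {in E, forall x, L h x = g x}) ->
  exists f, L f = g.
Proof.
move=> solvable.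
have ext0 : extendable (pickled_below 0) g.
  by move=> E; have [h hE] := solvable E; exists h.
have [P Pchain] := extendable_chain ext0.
have P_stable m n : (m <= n)%N -> {in pickled_below m, P n =1 P m}.
  move=> /subnK <-; elim: (n - m)%N => // k IH y ym.
  by rewrite addSn (Pchain _).2 ?IH // inE (leq_trans ym) // leq_addl.
exists (fun x => P (pickle x).+1 x); apply/funext => x.
have [m Nm] : exists m, {subset N x <= pickled_below m}.
  exists (\max_(y <- N x) (pickle y).+1)%N => y yN.
  by rewrite inE leq_bigmax_seq.
have [h hx hP] := (Pchain m).1 [:: x].
rewrite -(hx x (mem_head _ _)); apply: L_local => y /Nm ym.
by rewrite hP // (P_stable _ _ ym) // inE.
Qed.

End LinearOperator.

Lemma normc_real (R : rcfType) (a : R) : `|a%:C| = `|a|%:C.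
Proof. by rewrite normc_def /= expr0n addr0 sqrtr_sqr. Qed.

Lemma real_argmax_seq (T : eqType) (D : numDomainType) (F : T -> D) (s : seq T) :
  {in s, forall y, F y \is Num.real} -> s != [::] ->
  exists2 x, x \in s & {in s, forall y, F y <= F x}.
Proof.
elim: s => [//|a s IH] Freal _.
have Freal' : {in s, forall y, F y \is Num.real}.
  by move=> y ys; apply: Freal; rewrite in_cons ys orbT.
have [->|/(IH Freal') [x xs Fx]] := eqVneq s [::].
  by exists a; rewrite ?mem_head // => y; rewrite mem_seq1 => /eqP ->.
case/orP: (real_leVge (Freal a (mem_head a s)) (Freal' x xs)) => [ax|xa].
  exists x; first by rewrite in_cons xs orbT.
  by move=> y /predU1P[->|/Fx].
exists a; first exact: mem_head.
by move=> y /predU1P[->//|/Fx/le_trans]; apply.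
Qed.

Section SchrodingerOperator.
Variables (R : realType) (X : countType) (b : X -> X -> R) (V : X -> R).
Hypotheses (b_graph : weighted_graph b) (b_lf : locally_finite b).

Definition nbrs x : seq X :=
  finmap.enum_fset (fset_set [set y | 0 < b x y]%classic).

Lemma mem_nbrs x y : (y \in nbrs x) = (0 < b x y).
Proof.
rewrite /nbrs in_fset_set; last exact: b_lf.
by apply/idP/idP => [/set_mem | /mem_set].
Qed.

Lemma weight_ge0 x y : 0 <= b x y.
Proof. by case: b_graph. Qed.

Lemma fsbig_nbrs (M : nmodType) x (F : X -> M) :
  (forall y, b x y = 0 -> F y = 0) ->
  \sum_(y \in [set: X]) F y = \sum_(y <- nbrs x) F y.
Proof.
move=> F0; rewrite -(fsbig_widen [set y | 0 < b x y]%classic) //; last first.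
  move=> y [_ /negP bxy]; apply: F0; apply/eqP.
  by rewrite eq_le weight_ge0 andbT leNgt.
by rewrite fsbig_finite //; exact: b_lf.
Qed.

Lemma deg_nbrs x : deg b x = \sum_(y <- nbrs x) b x y.
Proof. by rewrite /deg (@fsbig_nbrs _ x) // => y ->. Qed.

Lemma deg_ge0 x : 0 <= deg b x.
Proof. by rewrite deg_nbrs sumr_ge0 // => y _; exact: weight_ge0. Qed.

Lemma schrodE f x : schrod b V f x =
  (deg b x + V x)%:C * f x - \sum_(y <- nbrs x) (b x y)%:C * f y.
Proof.
rewrite /schrod (@fsbig_nbrs _ x); last by move=> y ->; rewrite mul0r.
rewrite deg_nbrs rmorphD rmorph_sum /= mulrDl mulr_suml.
under eq_bigr do rewrite mulrBr.
by rewrite sumrB addrAC.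
Qed.

Lemma schrod_linear f g t x :
  schrod b V (fun y => f y + t * g y) x = schrod b V f x + t * schrod b V g x.
Proof.
rewrite !schrodE; under eq_bigr do rewrite mulrDr mulrCA.
rewrite big_split -mulr_sumr /=; ring.
Qed.

Lemma schrod_local f h x :
  {in x :: nbrs x, f =1 h} -> schrod b V f x = schrod b V h x.
Proof.
move=> fh; rewrite !schrodE fh ?mem_head //; congr (_ - _).
by apply: eq_big_seq => y yN; rewrite fh // inE yN orbT.
Qed.

Lemma gconnected_ind (P : X -> Prop) x y :
  (forall u v, P u -> 0 < b u v -> P v) -> P x -> gconnected b x y -> P y.
Proof.
move=> P_closed + [s [+ <-]]; elim: s x => [//|z s IH] x Px /= /andP[xz zs].
exact: IH (P_closed _ _ Px xz) zs.
Qed.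

Hypothesis V_cond : forall x, 0 <= V x \/ V x + 2 * deg b x <= 0.

Lemma deg_le_norm x : deg b x <= `|deg b x + V x|.
Proof.
have := deg_ge0 x; case: (V_cond x) => hV deg0.
  by rewrite ger0_norm ?addr_ge0 // lerDl.
by rewrite ler0_norm; lra.
Qed.

Lemma schrod_max_modulus phi u v : (forall y, `|phi y| <= `|phi u|) ->
  schrod b V phi u = 0 -> 0 < b u v -> `|phi v| = `|phi u|.
Proof.
move=> phi_max Lphi0 buv; set M := `|phi u| in phi_max *.
have balance :
    (deg b u + V u)%:C * phi u = \sum_(y <- nbrs u) (b u y)%:C * phi y.
  by apply/eqP; rewrite -subr_eq0 -schrodE Lphi0.
have deg_M : (deg b u)%:C * M <= \sum_(y <- nbrs u) (b u y)%:C * `|phi y|.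
  have deg_le : (deg b u)%:C * M <= `|(deg b u + V u)%:C * phi u|.
    by rewrite normrM normc_real ler_wpM2r ?normr_ge0 // lecR deg_le_norm.
  apply: le_trans deg_le _; rewrite balance.
  apply: le_trans (ler_norm_sum _ _ _) _.
  apply: ler_sum => y _.
  by rewrite normrM normc_real (ger0_norm (weight_ge0 u y)).
have defect_ge0 y : 0 <= (b u y)%:C * (M - `|phi y|).
  by rewrite mulr_ge0 ?ler0c ?weight_ge0 ?subr_ge0.
have : \sum_(y <- nbrs u) (b u y)%:C * (M - `|phi y|) == 0.
  rewrite eq_le sumr_ge0 // andbT.
  under eq_bigr do rewrite mulrBr.
  by rewrite sumrB subr_le0 -mulr_suml -rmorph_sum -deg_nbrs.
rewrite psumr_eq0 // => /allP /(_ v); rewrite mem_nbrs buv => /(_ isT).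
by rewrite mulf_eq0 (negbTE (lt0r_neq0 _)) ?ltcR //= subr_eq0 => /eqP.
Qed.

Hypothesis components_infinite : all_components_infinite b.

Lemma schrod_max_principle (s : seq X) phi :
  (forall y, y \notin s -> phi y = 0) ->
  {in s, forall x, schrod b V phi x = 0} ->
  forall y, phi y = 0.
Proof.
move=> phi_out Lphi0.
have [s0|s_neq0] := eqVneq s [::].
  by move=> y; apply: phi_out; rewrite s0.
have [x xs phi_max_s] := real_argmax_seq (fun y _ => normr_real (phi y)) s_neq0.
have phi_max y : `|phi y| <= `|phi x|.
  by have [/phi_max_s //|/phi_out ->] := boolP (y \in s); rewrite normr0.
have [phix0|phix_neq0] := eqVneq `|phi x| 0.
  by move=> y; apply/eqP; rewrite -normr_le0 -phix0.
have in_s y : `|phi y| = `|phi x| -> y \in s.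
  move=> phiy; apply/negPn/negP => /phi_out phiy0.
  by move: phix_neq0; rewrite -phiy phiy0 normr0 eqxx.
have level_closed y : gconnected b x y -> `|phi y| = `|phi x|.
  apply: (gconnected_ind (P := fun y => `|phi y| = `|phi x|)) => // u v.
  move=> phiu buv.
  rewrite -phiu.
  apply: schrod_max_modulus buv; first by move=> z; rewrite phiu.
  exact/Lphi0/in_s.
have [] := @components_infinite x; apply: sub_finite_set (finite_seq s).
by move=> y /level_closed /in_s.
Qed.

End SchrodingerOperator.

Close Scope complex_scope.
Unset Implicit Arguments.

Theorem corollary4p8 (R : realType) (X : countType) (b : X -> X -> R) (V : X -> R) :
  weighted_graph b -> locally_finite b -> all_components_infinite b ->
  (forall x, 0 <= V x \/ V x + 2 * deg b x <= 0) ->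
  forall g : X -> R[i], exists f : X -> R[i], schrod b V f = g.
Proof.
move=> b_graph b_lf b_inf V_cond g.
have L_linear := schrod_linear V b_graph b_lf.
apply: (surjective_of_solvable L_linear (schrod_local V b_graph b_lf)) => E.
apply: (solvable_on_seq L_linear) => phi.
exact: schrod_max_principle.
Qed.
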